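(* Let $\kappa=\kappa(|x|^2)$ and $\rho=\rho(|x|^2)$ be arbitrary smooth functions on a domain in $\mathbb{R}^n$ with $1-\kappa|x|^2>0$, and let $C$ be a non-zero constant. Then the Riemannian metric $$\bar\alpha=e^\rho\sqrt{|y|^2-\kappa\langle x,y\rangle^2}$$ has the closed and conformal $1$-form $$\bar\beta=C\sqrt{1-\kappa|x|^2}\,e^{2\rho}\langle x,y\rangle,$$ and $\bar b^2:=\|\bar\beta\|_{\bar\alpha}^2=C^2e^{2\rho}|x|^2$.
   Context: $|\cdot|$ and $\langle\cdot,\cdot\rangle$ denote the Euclidean norm and inner product on $\mathbb{R}^n$, and $(x,y)$ are standard coordinates on $T\mathbb{R}^n$. A $1$-form $\bar\beta=\bar b_iy^i$ is closed and conformal with respect to $\bar\alpha=\sqrt{\bar a_{ij}y^iy^j}$ if $\bar b_{i|j}=c(x)\bar a_{ij}$ for some function $c$, covariant derivative taken with respect to the Levi-Civita connection of $\bar\alpha$. *)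

From HB Require Import structures.
From mathcomp Require Import all_boot all_order all_algebra.
From mathcomp Require Import all_classical all_reals all_analysis.
Import Order.TTheory GRing.Theory Num.Theory.
Import numFieldNormedType.Exports.
Local Open Scope ring_scope.
Local Open Scope classical_set_scope.

Section Defs.
Context {R : realType} {n : nat}.

Definition dotp (x y : 'rV[R]_n) : R := \sum_i x 0 i * y 0 i.
Definition sqnorm (x : 'rV[R]_n) : R := dotp x x.

Definition evec (j : 'I_n) : 'rV[R]_n := delta_mx 0 j.
Definition pd (f : 'rV[R]_n -> R) (j : 'I_n) (x : 'rV[R]_n) : R :=
  'D_(evec j) f x.

Definition christoffel (a : 'rV[R]_n -> 'M[R]_n) (x : 'rV[R]_n)
  (k i j : 'I_n) : R :=
  2^-1 * \sum_l (invmx (a x)) k l *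
    (pd (fun z => a z l j) i x + pd (fun z => a z l i) j x
     - pd (fun z => a z i j) l x).

Definition covd (a : 'rV[R]_n -> 'M[R]_n) (b : 'rV[R]_n -> 'rV[R]_n)
  (x : 'rV[R]_n) (i j : 'I_n) : R :=
  pd (fun z => b z 0 i) j x - \sum_k christoffel a x k i j * b x 0 k.

(* beta = b_i y^i is closed and conformal w.r.t. alpha = sqrt(a_ij y^i y^j)
   on D: b_{i|j} = c(x) a_{ij} for some function c. *)
Definition closed_conformal_on (D : set 'rV[R]_n)
  (a : 'rV[R]_n -> 'M[R]_n) (b : 'rV[R]_n -> 'rV[R]_n) : Prop :=
  exists c : 'rV[R]_n -> R,
    forall x, D x -> forall i j, covd a b x i j = c x * a x i j.

Definition form_sqnorm (a : 'rV[R]_n -> 'M[R]_n) (b : 'rV[R]_n -> 'rV[R]_n)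
  (x : 'rV[R]_n) : R :=
  (b x *m invmx (a x) *m (b x)^T) 0 0.

End Defs.

Definition smooth_on {R : realType} (U : set R) (f : R -> R) : Prop :=
  forall (k : nat) (t : R), U t -> derivable (iter k (fun g => g^`()) f) t 1.

From HB Require Import structures.
From mathcomp Require Import all_boot all_order all_algebra.
From mathcomp Require Import all_classical all_reals all_analysis.
From mathcomp Require Import ring lra.
Import Order.TTheory GRing.Theory Num.Theory.
Import numFieldNormedType.Exports.
Local Open Scope ring_scope.
Local Open Scope classical_set_scope.

(** On [D] the hypotheses determine [a] and [b] completely (by polarization
    and by evaluation on basis vectors): [a x = F(|x|^2) (I - K(|x|^2) x^T x)] and
    [b x = h(|x|^2) x] with [F = e^(2 rho)], [K = kappa] and
    [h = C sqrt(1 - kappa t t) e^(2 rho)].  For every metric and 1-form of this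
    radial shape the inverse metric is again radial, so [b a^-1] is a multiple of
    [x], and a direct computation of the Christoffel symbols gives
    [b_(i|j) = c a_ij + e x_i x_j] with explicit [c] and [e] depending on [F], [K],
    [h] and their first derivatives.  For the weights above [e] vanishes
    identically, which is the closed-conformal property, and
    [|beta|^2 = h^2 |x|^2 / (F (1 - kappa |x|^2)) = C^2 e^(2 rho) |x|^2].
    Positivity of [alpha] is Cauchy-Schwarz together with [1 - kappa |x|^2 > 0]. *)


Section Euclidean.
Context {R : realType} {n : nat}.
Implicit Types x y : 'rV[R]_n.

Lemma dotpC x y : dotp x y = dotp y x.
Proof. by apply: eq_bigr => i _; rewrite mulrC. Qed.

Lemma mx11_dotp x y : (x *m y^T) 0 0 = dotp x y.
Proof. by rewrite mxE; apply: eq_bigr => i _; rewrite mxE. Qed.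

Lemma dotp_evec x i : dotp x (evec i) = x 0 i.
Proof.
rewrite /dotp (bigD1 i) //= big1 => [|j ji]; last by rewrite !mxE (negbTE ji) mulr0.
by rewrite !mxE !eqxx mulr1 addr0.
Qed.

Lemma sum_delta (f : 'I_n -> R) i :
  \sum_l f l * (l == i)%:R = f i.
Proof.
by rewrite (bigD1 i) //= eqxx mulr1 big1 ?addr0 // => l /negbTE ->; rewrite mulr0.
Qed.

Lemma sqnorm_ge0 x : 0 <= sqnorm x.
Proof. by apply: sumr_ge0 => i _; rewrite -expr2 sqr_ge0. Qed.

Lemma sqnorm_gt0 x : x != 0 -> 0 < sqnorm x.
Proof.
move=> x0; rewrite lt_def sqnorm_ge0 andbT; apply: contra x0 => /eqP x_null.
apply/eqP/rowP => i; apply/eqP; rewrite mxE -[_ == 0]orbb -mulf_eq0.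
by apply/eqP; apply: (psumr_eq0P _ x_null) => // j _; rewrite -expr2 sqr_ge0.
Qed.

Lemma dotp0 y : dotp 0 y = 0.
Proof. by rewrite /dotp big1 // => i _; rewrite mxE mul0r. Qed.

Lemma cauchy_schwarz x y : dotp x y ^+ 2 <= sqnorm x * sqnorm y.
Proof.
have [->|x0] := eqVneq x 0; first by rewrite /sqnorm !dotp0 expr0n mul0r.
set S := sqnorm x; set T := sqnorm y; set d := dotp x y.
have expand : sqnorm (S *: y - d *: x) = S * (S * T - d ^+ 2).
  rewrite {1}/sqnorm /dotp.
  transitivity (\sum_i (S ^+ 2 * (y 0 i * y 0 i) + d ^+ 2 * (x 0 i * x 0 i)
                        - 2 * S * d * (x 0 i * y 0 i))).
    by apply: eq_bigr => i _; rewrite !mxE; ring.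
  rewrite sumrB big_split /= -!mulr_sumr -/(dotp x y) -/(dotp x x) -/(dotp y y).
  by rewrite -/(sqnorm x) -/(sqnorm y) -/S -/T -/d; ring.
have := sqnorm_ge0 (S *: y - d *: x).
by rewrite expand pmulr_rge0 ?sqnorm_gt0 // subr_ge0.
Qed.

Lemma radial_qform_gt0 (k : R) x y :
  0 < 1 - k * sqnorm x -> y != 0 -> 0 < sqnorm y - k * dotp x y ^+ 2.
Proof.
move=> hx /sqnorm_gt0 y_gt0; have cs := cauchy_schwarz x y.
have [k_le0|k_gt0] := leP k 0.
  have : k * dotp x y ^+ 2 <= 0 by rewrite mulr_le0_ge0 ?sqr_ge0.
  lra.
have : k * dotp x y ^+ 2 <= k * (sqnorm x * sqnorm y) by rewrite ler_pM2l.
have : 0 < (1 - k * sqnorm x) * sqnorm y by rewrite mulr_gt0.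
lra.
Qed.
Lemma radial_qform_ge0 (k : R) x y :
  0 < 1 - k * sqnorm x -> 0 <= sqnorm y - k * dotp x y ^+ 2.
Proof.
move=> hx; have [->|y0] := eqVneq y 0.
  by rewrite /sqnorm dotp0 dotpC dotp0 expr0n mulr0 subr0.
exact/ltW/radial_qform_gt0.
Qed.
End Euclidean.

Section QuadraticForms.
Context {R : realType} {n : nat}.
Implicit Types (M N : 'M[R]_n) (x y u v : 'rV[R]_n).

Definition qform M y := (y *m M *m y^T) 0 0.

Lemma evec_mx_evec M i j : (evec i *m M *m (evec j)^T) 0 0 = M i j.
Proof. by rewrite trmx_delta -rowE -colE !mxE. Qed.

Lemma qformD M u v : M^T = M ->
  qform M (u + v) = qform M u + qform M v + 2 * (u *m M *m v^T) 0 0.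
Proof.
move=> M_sym; rewrite /qform linearD /= !mulmxDl !mulmxDr.
have -> : v *m M *m u^T = (u *m M *m v^T)^T by rewrite !trmx_mul trmxK M_sym mulmxA.
set uu := u *m M *m u^T; set uv := u *m M *m v^T; set vv := v *m M *m v^T.
by rewrite !mxE; ring.
Qed.

Lemma sym_qform_inj M N : M^T = M -> N^T = N -> qform M =1 qform N -> M = N.
Proof.
move=> M_sym N_sym eqMN; apply/matrixP => i j.
have := eqMN (evec i + evec j); rewrite !qformD // /qform !evec_mx_evec.
have := eqMN (evec i); have := eqMN (evec j); rewrite /qform !evec_mx_evec.
lra.
Qed.

Definition radial_mx (F K : R) x : 'M[R]_n := F *: (1%:M - K *: (x^T *m x)).

Lemma radial_mxE F K x i j :
  radial_mx F K x i j = F * ((i == j)%:R - K * (x 0 i * x 0 j)).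
Proof. by rewrite !mxE big_ord1 !mxE. Qed.

Lemma trmx_radial_mx F K x : (radial_mx F K x)^T = radial_mx F K x.
Proof.
by apply/matrixP => i j; rewrite mxE !radial_mxE eq_sym [x 0 j * _]mulrC.
Qed.

Lemma mul_row_trmx x : x *m x^T = (sqnorm x)%:M.
Proof. by rewrite [LHS]mx11_scalar mx11_dotp. Qed.

Lemma qform_radial_mx F K x y :
  qform (radial_mx F K x) y = F * (sqnorm y - K * dotp x y ^+ 2).
Proof.
rewrite /qform /radial_mx -scalemxAr -scalemxAl mulmxBr mulmx1 mulmxBl.
rewrite -scalemxAr -scalemxAl !mulmxA -[y *m x^T *m x *m y^T]mulmxA.
rewrite [y *m x^T]mx11_scalar [x *m y^T]mx11_scalar mul_row_trmx mul_scalar_mx.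
by rewrite !mx11_dotp (dotpC y x) !mxE eqxx !mulr1n; ring.
Qed.

Lemma mul_row_radial_mx F K x :
  x *m radial_mx F K x = (F * (1 - K * sqnorm x)) *: x.
Proof.
rewrite /radial_mx -scalemxAr mulmxBr mulmx1 -scalemxAr mulmxA mul_row_trmx.
by rewrite mul_scalar_mx; apply/rowP => i; rewrite !mxE; ring.
Qed.

Lemma mul_radial_mx F K G L x :
  radial_mx F K x *m radial_mx G L x = radial_mx (F * G) (K + L - K * L * sqnorm x) x.
Proof.
rewrite /radial_mx -scalemxAl -scalemxAr scalerA mulmxBl mul1mx !mulmxBr !mulmx1.
rewrite -!scalemxAl -!scalemxAr -mulmxA [x *m _]mulmxA mul_row_trmx mul_scalar_mx.
by rewrite -scalemxAr; apply/matrixP => i j; rewrite !mxE; ring.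
Qed.

Lemma invmx_mul1 M N : M *m N = 1%:M -> invmx M = N.
Proof.
move=> MN1; have [M_unit _] := mulmx1_unit MN1.
by rewrite -[invmx M]mulmx1 -MN1 mulmxA mulVmx // mul1mx.
Qed.

Lemma invmx_radial_mx F K x : F != 0 -> 1 - K * sqnorm x != 0 ->
  invmx (radial_mx F K x) = radial_mx F^-1 (- (K / (1 - K * sqnorm x))) x.
Proof.
move=> F0 hx; apply: invmx_mul1; rewrite mul_radial_mx mulfV //.
have -> : K - K / (1 - K * sqnorm x) - K * - (K / (1 - K * sqnorm x)) * sqnorm x = 0.
  by field.
by rewrite /radial_mx scale0r subr0 scale1r.
Qed.
End QuadraticForms.

Lemma is_derive_line {R : realType} {V W : normedModType R}
    (f : V -> W) (x v : V) (df : W) :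
  is_derive (0 : R) 1 (fun t => f (t *: v + x)) df -> is_derive x v f df.
Proof.
have quotE : (fun h : R => h^-1 *: (((fun t => f (t *: v + x)) \o shift 0) (h *: 1)
                                    - f (0 *: v + x)))
           = (fun h => h^-1 *: ((f \o shift x) (h *: v) - f x)).
  by apply/funext => h /=; rewrite addr0 scale0r add0r [h *: 1]mulr1.
by case=> [dline eline]; split; [move: dline | move: eline];
  rewrite /derivable /derive quotE.
Qed.

Section EuclideanDerivatives.
Context {R : realType} {n : nat}.
Implicit Types x v : 'rV[R]_n.

Lemma is_derive_coord_line x v i :
  is_derive (0 : R) 1 (fun t => (t *: v + x) 0 i) (v 0 i).
Proof.
have -> : (fun t => (t *: v + x) 0 i) = (fun t => t * v 0 i + x 0 i).
  by apply/funext => t; rewrite !mxE.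
apply: (is_derive_eq (is_deriveD (is_deriveM (is_derive_id (0 : R) 1)
  (is_derive_cst (v 0 i) (0 : R) 1)) (is_derive_cst (x 0 i) (0 : R) 1))).
by rewrite scaler0 add0r addr0 [_ *: 1]mulr1.
Qed.

Lemma is_derive_coord x v i : is_derive x v (fun z => z 0 i) (v 0 i).
Proof. apply: is_derive_line; exact: is_derive_coord_line. Qed.

Lemma is_derive_sqnorm_line x v :
  is_derive (0 : R) 1 (fun t => sqnorm (t *: v + x)) (2 * dotp x v).
Proof.
have -> : (fun t => sqnorm (t *: v + x))
        = \sum_i (fun t => (t *: v + x) 0 i * (t *: v + x) 0 i).
  by rewrite fct_sumE.
apply: is_derive_eq.
  by apply: is_derive_sum => i; apply: is_deriveM; apply: is_derive_coord_line.
rewrite /dotp mulr_sumr; apply: eq_bigr => i _.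
by rewrite scale0r add0r /GRing.scale /=; ring.
Qed.

Lemma is_derive_radial (f : R -> R) (f1 : R) x v :
  is_derive (sqnorm x) 1 f f1 ->
  is_derive x v (fun z => f (sqnorm z)) (f1 * (2 * dotp x v)).
Proof.
move=> df; apply: is_derive_line.
apply: (@is_derive1_comp _ f (fun t => sqnorm (t *: v + x))); last first.
  exact: is_derive_sqnorm_line.
by rewrite scale0r add0r.
Qed.
End EuclideanDerivatives.

Lemma christoffel_contract {R : realType} {n : nat}
    (a : 'rV[R]_n -> 'M[R]_n) (b : 'rV[R]_n -> 'rV[R]_n) x i j :
  \sum_k christoffel a x k i j * b x 0 k =
  2^-1 * \sum_l (b x *m invmx (a x)) 0 l *
    (pd (fun z => a z l j) i x + pd (fun z => a z l i) j x - pd (fun z => a z i j) l x).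
Proof.
rewrite /christoffel.
transitivity (\sum_k \sum_l 2^-1 * (b x 0 k * invmx (a x) k l *
  (pd (fun z => a z l j) i x + pd (fun z => a z l i) j x - pd (fun z => a z i j) l x))).
  by apply: eq_bigr => k _; rewrite mulr_sumr mulr_suml; apply: eq_bigr => l _; ring.
rewrite exchange_big mulr_sumr; apply: eq_bigr => l _.
by rewrite mxE mulr_suml mulr_sumr; apply: eq_bigr => k _; ring.
Qed.

Definition radial_metric {R : realType} {n : nat} (F K : R -> R) (z : 'rV[R]_n) :=
  radial_mx (F (sqnorm z)) (K (sqnorm z)) z.

Definition radial_form {R : realType} {n : nat} (h : R -> R) (z : 'rV[R]_n) :=
  h (sqnorm z) *: z.

Section RadialCovariantDerivative.
Context {R : realType} {n : nat} {F K h : R -> R} {x : 'rV[R]_n} {F1 K1 h1 : R}.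
Let s := sqnorm x.
Hypotheses (dF : is_derive s 1 F F1) (dK : is_derive s 1 K K1)
  (dh : is_derive s 1 h h1).

Lemma pd_radial_metric l m v :
  pd (fun z => radial_metric F K z l m) v x =
  2 * F1 * x 0 v * ((l == m)%:R - K s * (x 0 l * x 0 m))
  - F s * (2 * K1 * x 0 v * (x 0 l * x 0 m)
           + K s * ((l == v)%:R * x 0 m + x 0 l * (m == v)%:R)).
Proof.
rewrite /pd /radial_metric; under [fun z => _]funext do rewrite radial_mxE.
apply: derive_val; apply: is_derive_eq.
  apply: is_deriveM; first exact: is_derive_radial dF.
  (* the constant term is discharged by the [is_derive] instance for constants *)
  apply: is_deriveB.
  apply: is_deriveM; first exact: is_derive_radial dK.
  by apply: is_deriveM; apply: is_derive_coord.
by rewrite !dotp_evec !mxE /GRing.scale /= -/s; ring.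
Qed.

Lemma pd_radial_form i v :
  pd (fun z => radial_form h z 0 i) v x = 2 * h1 * x 0 v * x 0 i + h s * (i == v)%:R.
Proof.
rewrite /pd /radial_form; under [fun z => _]funext do rewrite mxE.
apply: derive_val; apply: is_derive_eq.
  by apply: is_deriveM; first exact: is_derive_radial dh; exact: is_derive_coord.
by rewrite dotp_evec !mxE /GRing.scale /= -/s; ring.
Qed.

Hypotheses (F_neq0 : F s != 0) (K_nondeg : 1 - K s * s != 0).

Lemma radial_form_mul_invmx :
  radial_form h x *m invmx (radial_metric F K x) = (h s / (F s * (1 - K s * s))) *: x.
Proof.
rewrite invmx_radial_mx // /radial_form -scalemxAl mul_row_radial_mx scalerA.
by rewrite -/s; congr (_ *: _); field; rewrite F_neq0 K_nondeg.
Qed.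

Lemma radial_form_sqnorm :
  (radial_form h x *m invmx (radial_metric F K x) *m (radial_form h x)^T) 0 0
  = h s ^+ 2 * s / (F s * (1 - K s * s)).
Proof.
rewrite radial_form_mul_invmx /radial_form [(_ *: x)^T]linearZ /= -scalemxAl -scalemxAr.
by rewrite mul_row_trmx !mxE eqxx mulr1n -/s; field; rewrite F_neq0 K_nondeg.
Qed.

Context {a : 'rV[R]_n -> 'M[R]_n} {b : 'rV[R]_n -> 'rV[R]_n}.
Hypotheses (a_near : \forall z \near x, a z = radial_metric F K z)
  (b_near : \forall z \near x, b z = radial_form h z).

Let g := h s / (F s * (1 - K s * s)).

Lemma covd_radial i j :
  covd a b x i j =
  (h s + g * s * (F s * K s + F1)) / F s * a x i j
  + (2 * h1 - g * (2 * F1 - (F1 * K s + F s * K1) * s)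
     + K s * (h s + g * s * (F s * K s + F1))) * (x 0 i * x 0 j).
Proof.
have pd_a l m v : pd (fun z => a z l m) v x = pd (fun z => radial_metric F K z l m) v x.
  by apply: near_eq_derive; apply: filterS a_near => z ->.
have pd_b : pd (fun z => b z 0 i) j x = pd (fun z => radial_form h z 0 i) j x.
  by apply: near_eq_derive; apply: filterS b_near => z ->.
rewrite /covd christoffel_contract pd_b pd_radial_form (nbhs_singleton a_near).
rewrite (nbhs_singleton b_near) radial_form_mul_invmx -/g radial_mxE.
have contract : \sum_l (g *: x) 0 l * (pd (fun z => a z l j) i x
      + pd (fun z => a z l i) j x - pd (fun z => a z i j) l x)
  = \sum_l (- 2 * g * ((F1 * K s + F s * K1) * (x 0 i * x 0 j)
                       + (F s * K s + F1) * (i == j)%:R) * (x 0 l * x 0 l)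
            + 2 * g * F1 * x 0 i * (x 0 l * (l == j)%:R)
            + 2 * g * F1 * x 0 j * (x 0 l * (l == i)%:R)).
  apply: eq_bigr => l _; rewrite !pd_a !pd_radial_metric mxE.
  by rewrite (eq_sym i l) (eq_sym j l) (eq_sym j i); ring.
rewrite contract !big_split /= -!mulr_sumr !sum_delta -/(dotp x x) -/(sqnorm x) -/s.
by field.
Qed.
End RadialCovariantDerivative.

Definition metric_weight {R : realType} (rho : R -> R) (t : R) := expR (2 * rho t).

Definition form_weight {R : realType} (kappa rho : R -> R) (C t : R) :=
  C * Num.sqrt (1 - kappa t * t) * expR (2 * rho t).

Section Weights.
Context {R : realType} {kappa rho : R -> R} {t k1 r1 : R}.
Variable C : R.
Hypotheses (dk : is_derive t 1 kappa k1) (dr : is_derive t 1 rho r1)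
  (nondeg : 0 < 1 - kappa t * t).
Let q := Num.sqrt (1 - kappa t * t).
Let F := metric_weight rho t.
Let F1 := 2 * r1 * F.
Let h := form_weight kappa rho C t.
Let h1 := C * F * (2 * r1 * q - (k1 * t + kappa t) / (2 * q)).
Let g := h / (F * (1 - kappa t * t)).

Lemma is_derive_metric_weight : is_derive t 1 (metric_weight rho) F1.
Proof.
have d2rho : is_derive t 1 (fun u => 2 * rho u) (2 * r1) := is_deriveZ 2 dr.
apply: (is_derive_eq (is_derive1_comp (is_derive_expR _) d2rho)).
by rewrite /F1 /F /metric_weight mulrC.
Qed.

Lemma is_derive_form_weight : is_derive t 1 (form_weight kappa rho C) h1.
Proof.
have dP : is_derive t 1 (fun u => 1 - kappa u * u) (0 - (kappa t *: 1 + t *: k1)) :=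
  is_deriveB (is_derive_cst (1 : R) t 1) (is_deriveM dk (is_derive_id t 1)).
have dq := @is_derive1_comp _ Num.sqrt (fun u => 1 - kappa u * u) t _ _
  (is_derive1_sqrt nondeg) dP.
apply: (is_derive_eq (is_deriveM (is_deriveM (is_derive_cst C t 1) dq)
                                 is_derive_metric_weight)).
have q0 : q != 0 by rewrite gt_eqF // sqrtr_gt0.
by rewrite /h1 /F1 /F /metric_weight /GRing.scale /= !fctE -/q; field.
Qed.

Lemma radial_defect_eq0 :
  2 * h1 - g * (2 * F1 - (F1 * kappa t + F * k1) * t)
  + kappa t * (h + g * t * (F * kappa t + F1)) = 0.
Proof.
have q0 : q != 0 by rewrite gt_eqF // sqrtr_gt0.
have P0 : 1 - kappa t * t != 0 by rewrite gt_eqF.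
have F0 : F != 0 by rewrite gt_eqF // expR_gt0.
transitivity (C * F * (k1 * t + kappa t) * (q ^+ 2 - (1 - kappa t * t))
              / (q * (1 - kappa t * t))).
  rewrite /g /h1 /F1 /h /form_weight -/q -/(metric_weight rho t) -/F.
  by field; rewrite P0 q0 F0.
by rewrite sqr_sqrtr ?(ltW nondeg) // subrr mulr0 mul0r.
Qed.

Lemma radial_conformal_factorE :
  (h + g * t * (F * kappa t + F1)) / F = C * (1 + 2 * r1 * t) * q / (1 - kappa t * t).
Proof.
have P0 : 1 - kappa t * t != 0 by rewrite gt_eqF.
have F0 : F != 0 by rewrite gt_eqF // expR_gt0.
by rewrite /g /F1 /h /form_weight -/q -/(metric_weight rho t) -/F; field; rewrite P0 F0.
Qed.
End Weights.

Theorem corollary5p3 (R : realType) (n : nat) (D : set 'rV[R]_n) (U : set R)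
  (kappa rho : R -> R) (C : R)
  (a : 'rV[R]_n -> 'M[R]_n) (b : 'rV[R]_n -> 'rV[R]_n) :
  open D -> connected D ->
  open U -> (forall x, D x -> U (sqnorm x)) ->
  smooth_on U kappa -> smooth_on U rho ->
  (forall x, D x -> 0 < 1 - kappa (sqnorm x) * sqnorm x) ->
  C != 0 ->
  let alpha := fun x y : 'rV[R]_n =>
    expR (rho (sqnorm x)) * Num.sqrt (sqnorm y - kappa (sqnorm x) * dotp x y ^+ 2) in
  let beta := fun x y : 'rV[R]_n =>
    C * Num.sqrt (1 - kappa (sqnorm x) * sqnorm x) * expR (2 * rho (sqnorm x)) * dotp x y in
  (* a_ij is the (symmetric) matrix of alpha: alpha^2 = a_ij y^i y^j *)
  (forall x, D x -> (a x)^T = a x /\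
     forall y, alpha x y ^+ 2 = (y *m a x *m y^T) 0 0) ->
  (* b_i are the coefficients of beta: beta = b_i y^i *)
  (forall x, D x -> forall y, beta x y = (y *m (b x)^T) 0 0) ->
  (forall x, D x -> forall y, y != 0 -> 0 < alpha x y) /\
  closed_conformal_on D a b /\
  (forall x, D x ->
     form_sqnorm a b x = C ^+ 2 * expR (2 * rho (sqnorm x)) * sqnorm x).
Proof.
move=> D_open _ _ DU kappa_smooth rho_smooth nondeg _ alpha beta a_alpha b_beta.
have a_radial x : D x -> a x = radial_metric (metric_weight rho) kappa x.
  move=> Dx; have [a_sym a_qform] := a_alpha x Dx.
  apply: sym_qform_inj => // [|y]; first exact: trmx_radial_mx.
  rewrite qform_radial_mx /qform -a_qform exprMn sqr_sqrtr ?radial_qform_ge0 ?nondeg //.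
  by rewrite -expRM_natl.
have b_radial (x : 'rV[R]_n) : D x -> b x = radial_form (form_weight kappa rho C) x.
  move=> Dx; apply/rowP => i; have := b_beta x Dx (evec i).
  rewrite /beta dotp_evec -rowE !mxE => <-; reflexivity.
have F0 (z : 'rV[R]_n) : metric_weight rho (sqnorm z) != 0.
  exact: lt0r_neq0 (expR_gt0 _).
split; [|split].
- move=> x Dx y y0; rewrite /alpha mulr_gt0 ?expR_gt0 // sqrtr_gt0.
  exact: radial_qform_gt0 (nondeg x Dx) y0.
- exists (fun x => C * (1 + 2 * 'D_1 rho (sqnorm x) * sqnorm x)
                  * Num.sqrt (1 - kappa (sqnorm x) * sqnorm x)
                  / (1 - kappa (sqnorm x) * sqnorm x)) => x Dx i j.
  have dk : is_derive (sqnorm x) 1 kappa ('D_1 kappa (sqnorm x)) :=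
    derivableP (kappa_smooth 0%N _ (DU x Dx)).
  have dr : is_derive (sqnorm x) 1 rho ('D_1 rho (sqnorm x)) :=
    derivableP (rho_smooth 0%N _ (DU x Dx)).
  have D_near : \forall z \near x, D z by exact: D_open.
  have nd := nondeg x Dx.
  rewrite (covd_radial (is_derive_metric_weight dr) dk
    (is_derive_form_weight C dk dr nd) (F0 x) (lt0r_neq0 nd) (filterS a_radial D_near) (filterS b_radial D_near)).
  by rewrite (radial_defect_eq0 C nd) mul0r addr0 (radial_conformal_factorE C nd).
- move=> x Dx; have P0 := lt0r_neq0 (nondeg x Dx).
  rewrite /form_sqnorm a_radial // b_radial // radial_form_sqnorm //.
  rewrite /form_weight /metric_weight !exprMn sqr_sqrtr ?(ltW (nondeg x Dx)) //.
  by field; rewrite P0 lt0r_neq0 ?expR_gt0.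
Qed.
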